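(* Let $n\ge1$ and $\ell\ge1$, and let $\mathcal{R}_{\ell,e}(\mathcal{C}_{n,A})$ be the set of regions of $\mathcal{C}_{n,A}$ of level $\ell$ contained in $\{x_1>x_2>\dots>x_n\}$. For $\Delta\in\mathcal{R}_{\ell,e}(\mathcal{C}_{n,A})$ and $\bm x\in\Delta$, the set $K=\{k\in[n-1]:x_k-x_{k+1}>a_1\}$ has exactly $\ell-1$ elements $i_1<\dots<i_{\ell-1}$; put $i_0=0$, $i_\ell=n$, $n_j=i_j-i_{j-1}$, and let $\Delta_j$ be the region of $\mathcal{C}_{n_j,A}$ containing $(x_{i_{j-1}+1},\dots,x_{i_j})$. Then $\varphi_\ell(\Delta)=(\Delta_1,\dots,\Delta_\ell)$ is independent of the choice of $\bm x\in\Delta$, each $\Delta_j$ lies in $\mathcal{R}_{1,e}(\mathcal{C}_{n_j,A})$, and \[\varphi_\ell:\mathcal{R}_{\ell,e}(\mathcal{C}_{n,A})\longrightarrow\bigsqcup_{\substack{n_1+\dots+n_\ell=n\\ n_1,\dots,n_\ell>0}}\mathcal{R}_{1,e}(\mathcal{C}_{n_1,A})\times\cdots\times\mathcal{R}_{1,e}(\mathcal{C}_{n_\ell,A})\] is a bijection.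
   Context: Let $A=\{a_1,\dots,a_m\}$ with $a_1>\dots>a_m>0$; for $n\ge1$, $\mathcal{C}_{n,A}$ is the arrangement in $\mathbb{R}^n$ of hyperplanes $x_i-x_j=0$ ($i<j$) and $x_i-x_j=a_k$ ($i\ne j$, $1\le k\le m$) (for $n=1$ it is empty and its unique region $\mathbb{R}$ has level 1); regions are connected components of the complement. The level of $X\subseteq\mathbb{R}^n$ is the smallest integer $\ell\ge0$ such that there are a linear subspace $W$ of dimension $\ell$ and $r>0$ with $X\subseteq\{\bm x:\min_{\bm y\in W}\|\bm x-\bm y\|\le r\}$. *)

From HB Require Import structures.
From mathcomp Require Import all_boot all_order all_algebra.
From mathcomp Require Import all_classical all_reals all_analysis.
Set Implicit Arguments. Unset Strict Implicit. Unset Printing Implicit Defensive.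
Import Order.TTheory GRing.Theory Num.Theory numFieldNormedType.Exports.
Local Open Scope classical_set_scope.
Local Open Scope ring_scope.

Section Defs.
Variable R : realType.
(* A = {a_0 > a_1 > ... > a_m} (0-based; the paper's a_1 is [a ord0]). *)
Variables (m : nat) (a : 'I_m.+1 -> R).

Definition arr_compl (n : nat) : set 'rV[R]_n :=
  [set x | (forall i j : 'I_n, (i < j)%N -> x 0 i - x 0 j != 0) /\
           (forall (i j : 'I_n) (k : 'I_m.+1), i != j -> x 0 i - x 0 j != a k)].

Definition is_region (n : nat) (X : set 'rV[R]_n) : Prop :=
  exists2 x, @arr_compl n x & X = connected_component (@arr_compl n) x.

Definition enorm (n : nat) (v : 'rV[R]_n) : R := Num.sqrt (\sum_i (v 0 i) ^+ 2).

(* X lies in the closed r-neighbourhood of some l-dimensional linear subspace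
   W (the row space of a rank-l matrix) for some r > 0.  The distance
   min_{y in W} |x - y| is attained, so "min <= r" is "exists y in W, |x-y| <= r". *)
Definition tube_dim (n : nat) (X : set 'rV[R]_n) (l : nat) : Prop :=
  exists W : 'M[R]_(l, n), \rank W = l /\
    exists2 r : R, 0 < r &
      forall x, X x -> exists2 y : 'rV[R]_n, (y <= W)%MS & enorm (x - y) <= r.

Definition has_level (n : nat) (X : set 'rV[R]_n) (l : nat) : Prop :=
  tube_dim X l /\ forall l', (l' < l)%N -> ~ tube_dim X l'.

Definition dom_chamber (n : nat) : set 'rV[R]_n :=
  [set x | forall i j : 'I_n, (i < j)%N -> x 0 j < x 0 i].

Definition Rle (n l : nat) (D : set 'rV[R]_n) : Prop :=
  is_region D /\ has_level D l /\ D `<=` @dom_chamber n.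

(* 0-based coordinate access, 0 outside range *)
Definition xat (n : nat) (x : 'rV[R]_n) (i : nat) : R :=
  odflt 0 (omap (fun j : 'I_n => x 0 j) (insub i)).

(* K = {k in [n-1] : x_k - x_{k+1} > a_1} (1-based k), increasingly sorted *)
Definition Kset (n : nat) (x : 'rV[R]_n) : seq nat :=
  [seq k <- iota 1 n.-1 | a ord0 < xat x k.-1 - xat x k].

(* (x_{p+1}, ..., x_q) in R^{q-p} *)
Definition block (n : nat) (x : 'rV[R]_n) (p q : nat) : 'rV[R]_(q - p)%N :=
  \row_(t < (q - p)%N) xat x (p + t)%N.

Definition region_of (k : nat) (y : 'rV[R]_k) : set 'rV[R]_k :=
  connected_component (@arr_compl k) y.

Definition regT := {k : nat & set 'rV[R]_k}.

(* phi(x) = (Delta_1, ..., Delta_l), each Delta_j tagged with its dimension n_j *)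
Definition phi (n : nat) (x : 'rV[R]_n) : seq regT :=
  pairmap (fun p q : nat => existT (fun k => set 'rV[R]_k) (q - p)%N (region_of (block x p q)))
          0%N (rcons (Kset x) n).

Fixpoint all_blocks (s : seq regT) : Prop :=
  match s with
  | [::] => True
  | b :: s' => (0 < projT1 b)%N /\ Rle 1 (projT2 b) /\ all_blocks s'
  end.

(* elements of the disjoint union over compositions n_1+...+n_l = n (n_j>0)
   of R_{1,e}(C_{n_1,A}) x ... x R_{1,e}(C_{n_l,A}) *)
Definition codom_elt (n l : nat) (s : seq regT) : Prop :=
  size s = l /\ sumn (map (fun b : regT => projT1 b) s) = n /\ all_blocks s.

End Defs.

From HB Require Import structures.
From mathcomp Require Import all_boot all_order all_algebra.
From mathcomp Require Import all_classical all_reals all_analysis.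
From mathcomp Require Import ring lra zify.
From Stdlib Require Import Eqdep_dec.

(* A point of the complement lies in the region determined by its position
   relative to the walls [x_i - x_j = c], c in {0} ∪ A.  Inside the chamber, the
   gaps [x_k - x_(k+1) > a_1] split the coordinates into blocks whose entries
   differ by at most [n a_1], and this is preserved throughout the region.
   Hence the region stays within bounded distance of the span of the block
   indicator vectors, while raising any initial run of blocks keeps one inside
   the region, so its level is [|K| + 1].  The same description shows that a
   region is determined by [K] together with the regions of its blocks, which
   gives injectivity; stacking representatives of prescribed level-one regions
   far apart gives surjectivity. *)

Set Implicit Arguments. Unset Strict Implicit. Unset Printing Implicit Defensive.
Import Order.TTheory GRing.Theory Num.Theory numFieldNormedType.Exports.
Local Open Scope classical_set_scope.
Local Open Scope ring_scope.

Lemma convex_gt (R : realFieldType) (t u v c : R) :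
  0 <= t <= 1 -> c < u -> c < v -> c < (1 - t) * u + t * v.
Proof.
move=> /andP[t0 t1] cu cv.
have : 0 <= (1 - t) * (u - c) by apply: mulr_ge0; rewrite subr_ge0 // ltW.
case: (ltrP 0 t) => [tp|tn]; last by rewrite (_ : t = 0); lra.
have : 0 < t * (v - c) by apply: mulr_gt0; rewrite // subr_gt0.
lra.
Qed.

Lemma convex_lt (R : realFieldType) (t u v c : R) :
  0 <= t <= 1 -> u < c -> v < c -> (1 - t) * u + t * v < c.
Proof.
move=> ht uc vc; have := @convex_gt R t (- u) (- v) (- c) ht.
rewrite !ltrN2 => /(_ uc vc); lra.
Qed.

Lemma is_interval_side (R : realDomainType) (I : set R) u v c :
  is_interval I -> I u -> I v -> ~ I c -> (c < u <-> c < v).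
Proof.
move=> hI Iu Iv Ic.
suff side w w' : I w -> I w' -> c < w -> c < w' by split; apply: side.
move=> Iw Iw' cw; rewrite ltNge; apply/negP => w'c.
by apply: Ic; apply: (hI w' w) => //; rewrite w'c ltW.
Qed.

Lemma segment_continuous (R : realType) n (x y : 'rV[R]_n) :
  continuous (fun t : R => x + t *: y).
Proof. by move=> t; apply: cvgD; [exact: cvg_cst | exact: continuousZr_tmp]. Qed.

Lemma eq_pairmap_path (T : Type) (f g : nat -> nat -> T) (r : rel nat) c s :
  path r c s -> (forall p q, r p q -> f p q = g p q) -> pairmap f c s = pairmap g c s.
Proof. by elim: s c => [//|z s IH] c /= /andP[h1 h2] E; rewrite E // IH. Qed.

Lemma path_all_and (e : rel nat) (P : pred nat) c s : path e c s -> all P s ->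
  path (fun p q => e p q && P q) c s.
Proof. by elim: s c => [//|z s IH] c /= /andP[-> h] /andP[-> h']; rewrite IH. Qed.

Lemma map_projT1_pairmap (P : nat -> Type) (g : nat -> nat -> nat)
    (h : forall p q, P (g p q)) c s :
  map (fun b : {k : nat & P k} => projT1 b)
    (pairmap (fun p q => existT P (g p q) (h p q)) c s) = pairmap g c s.
Proof. by elim: s c => [//|z s IH] c /=; rewrite IH. Qed.

Lemma sumn_pairmap_subn c s : path leq c s ->
  (sumn (pairmap (fun p q => q - p) c s) + c)%N = last c s.
Proof. by elim: s c => [//|z s IH] c /= /andP[h1 h2]; rewrite -(IH z h2); lia. Qed.

Lemma pairmap_subn_inj c s1 s2 : path leq c s1 -> path leq c s2 ->
  pairmap (fun p q => (q - p)%N) c s1 = pairmap (fun p q => (q - p)%N) c s2 -> s1 = s2.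
Proof.
elim: s1 c s2 => [|z1 s1 IH] c [|z2 s2] //= /andP[h1 h2] /andP[h3 h4] [e1 e2].
have ez : z1 = z2 by lia.
by subst z2; rewrite (IH z1 s2).
Qed.

Lemma pairmap_map_iota (T : Type) (F : nat -> nat -> T) (Q : nat -> nat) j0 L :
  pairmap F (Q j0) (map Q (iota j0.+1 L)) = map (fun j => F (Q j) (Q j.+1)) (iota j0 L).
Proof. by elim: L j0 => [//|L IH] j0 /=; rewrite IH. Qed.

Lemma path_nth_lt d c s j : path ltn c s -> (j < size s)%N ->
  (nth d (c :: s) j < nth d s j)%N.
Proof. by elim: s c j => [//|z s IH] c [|j] /= /andP[h1 h2] // hj; exact: IH. Qed.

Lemma path_nth_between d c s j k : path ltn c s -> (j < size s)%N -> k \in s ->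
  ~~ ((nth d (c :: s) j < k) && (k < nth d s j))%N.
Proof.
elim: s c j => [//|z s IH] c j /= /andP[h1 h2] hj.
have hall : all (ltn z) s by apply: (order_path_min ltn_trans).
rewrite inE => /orP[/eqP ->|ks].
  case: j hj => [|j] hj /=; first by rewrite ltnn andbF.
  apply/negP => /andP[hh _]; move: hh; apply/negP; rewrite -leqNgt.
  case: j hj => [|j] hj //=; apply: ltnW.
  have hjs : (j < size s)%N by lia.
  by move/allP: hall; apply; apply: mem_nth.
case: j hj => [|j] hj /=; last exact: IH.
by move/allP: hall => /(_ k ks) /= hk; apply/negP => /andP[_ hh]; lia.
Qed.

Lemma path_locate c s i : path ltn c s -> (c <= i)%N -> (i < last c s)%N ->
  exists2 j, (j < size s)%N & (nth 0 (c :: s) j <= i)%N && (i < nth 0 s j)%N.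
Proof.
elim: s c => [|z s IH] c /=; first by lia.
move=> /andP[h1 h2] ci il; case: (ltnP i z) => iz; first by exists 0%N => //; rewrite ci iz.
by have [j hj hh] := IH z h2 iz il; exists j.+1.
Qed.

Section Coordinates.
Variable R : realType.

Lemma xatE n (x : 'rV[R]_n) i (hi : (i < n)%N) : xat x i = x 0 (Ordinal hi).
Proof. by rewrite /xat insubT. Qed.

Lemma xat_ord n (x : 'rV[R]_n) (i : 'I_n) : xat x i = x 0 i.
Proof. by rewrite (xatE x (ltn_ord i)); congr (x 0 _); apply: val_inj. Qed.

Lemma xat_lerp n (x z : 'rV[R]_n) t i : (i < n)%N ->
  xat (x + t *: (z - x)) i = (1 - t) * xat x i + t * xat z i.
Proof. by move=> hi; rewrite !(xatE _ hi) !mxE; ring. Qed.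

Lemma xat_block n (x : 'rV[R]_n) p q t : (t < q - p)%N ->
  xat (block x p q) t = xat x (p + t).
Proof. by move=> ht; rewrite (xatE _ ht) mxE. Qed.

Lemma xat_continuous n i : (i < n)%N -> continuous (fun p : 'rV[R]_n => xat p i).
Proof. by move=> hi; rewrite /xat insubT; exact: coord_continuous. Qed.

End Coordinates.

Section Tubes.
Variable R : realType.

Lemma coord_le_enorm n (v : 'rV[R]_n) i : `|v 0 i| <= enorm v.
Proof.
rewrite /enorm -sqrtr_sqr; apply: ler_wsqrtr.
by rewrite (bigD1 i) //= lerDl; apply: sumr_ge0 => j _; exact: sqr_ge0.
Qed.

Lemma enorm_le n (v : 'rV[R]_n) C : 0 <= C -> (forall i, `|v 0 i| <= C) ->
  enorm v <= n%:R * C.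
Proof.
move=> C0 hv; rewrite /enorm -(ger0_norm (mulr_ge0 (ler0n _ n) C0)) -sqrtr_sqr.
apply: ler_wsqrtr; apply: (@le_trans _ _ (\sum_(i < n) C ^+ 2)).
  by apply: ler_sum => i _; move: (hv i); rewrite ler_norml => /andP[? ?]; nra.
rewrite sumr_const card_ord -(mulr_natl (C ^+ 2)) exprMn.
by apply: ler_wpM2r; [exact: sqr_ge0 | rewrite -natrX ler_nat; nia].
Qed.

(* A direction along which a half-line stays in a tube around [W] lies in [W]:
   a linear form vanishing on [W] but not on [d] grows without bound on it. *)
Lemma tube_recession n l (W : 'M[R]_(l, n)) (x d : 'rV[R]_n) r :
  (forall s, 0 <= s -> exists2 y : 'rV[R]_n, (y <= W)%MS & enorm (x + s *: d - y) <= r) ->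
  (d <= W)%MS.
Proof.
move=> H; rewrite submxE; apply/negPn/negP => hn.
pose K := cokermx W.
have [c hc] : exists c, (d *m K) 0 c != 0.
  case: (pselect (exists c, (d *m K) 0 c != 0)) => // hne.
  move/negP: hn; case; apply/eqP/matrixP => i j; rewrite (ord1 i) [RHS]mxE.
  by apply/eqP; apply/negPn/negP => h; apply: hne; exists j.
pose phi (p : 'rV[R]_n) := (p *m K) 0 c.
pose Cst := \sum_i `|K i c|.
have Cst0 : 0 <= Cst by apply: sumr_ge0 => i _.
have phiB (p : 'rV[R]_n) : `|phi p| <= Cst * enorm p.
  rewrite /phi mxE mulr_suml; apply: le_trans (ler_norm_sum _ _ _) _.
  apply: ler_sum => i _; rewrite normrM mulrC; apply: ler_wpM2l => //.
  exact: coord_le_enorm.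
have phiW y : (y <= W)%MS -> phi y = 0.
  by move=> /submxP [D ->]; rewrite /phi -mulmxA mulmx_coker mulmx0 mxE.
have phiL s y : phi (x + s *: d - y) = phi x + s * phi d - phi y.
  by rewrite /phi mulmxBl mulmxDl -scalemxAl !mxE.
set u := `|phi d|.
have u0 : 0 < u by rewrite normr_gt0.
pose s := (Cst * r + `|phi x| + 1) / u.
have s0 : 0 <= s.
  apply: divr_ge0; last exact: ltW.
  have : 0 <= Cst * r.
    have [y _ hy] := H 0 (lexx _).
    by apply: mulr_ge0 => //; apply: le_trans hy; rewrite /enorm sqrtr_ge0.
  by have := normr_ge0 (phi x); lra.
have [y hy hr] := H s s0.
have := phiB (x + s *: d - y); rewrite phiL (phiW _ hy) subr0 => h1.
have h2 : Cst * enorm (x + s *: d - y) <= Cst * r by apply: ler_wpM2l.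
have h3 := lerB_normD (s * phi d) (phi x).
have h4 : `|s * phi d| = Cst * r + `|phi x| + 1.
  by rewrite normrM (ger0_norm s0) /s -/u divfK // gt_eqF.
rewrite [s * phi d + phi x]addrC h4 in h3.
lra.
Qed.

Lemma has_level_uniq n (X : set 'rV[R]_n) l1 l2 :
  has_level X l1 -> has_level X l2 -> l1 = l2.
Proof.
move=> [t1 m1] [t2 m2]; apply/eqP; rewrite eqn_leq.
by apply/andP; split; rewrite leqNgt; apply/negP => h; [exact: (m1 _ h t2) | exact: (m2 _ h t1)].
Qed.

End Tubes.

Section Arrangement.
Variables (R : realType) (m : nat) (a : 'I_m.+1 -> R).
Hypothesis ha_pos : forall k, 0 < a k.
Hypothesis ha_dec : forall k k' : 'I_m.+1, (k < k')%N -> a k' < a k.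

Definition wall_const (c : R) := c = 0 \/ exists k, c = a k.

Lemma wall_const0 : wall_const 0. Proof. by left. Qed.
Lemma wall_const_a0 : wall_const (a ord0). Proof. by right; exists ord0. Qed.

Lemma wall_const_ge0 c : wall_const c -> 0 <= c.
Proof. by case=> [->|[k ->]] //; exact/ltW. Qed.

Lemma wall_const_le c : wall_const c -> c <= a ord0.
Proof.
case=> [->|[k ->]]; first exact/ltW.
case: (posnP k) => [k0|k0]; last exact/ltW/ha_dec.
by have -> : k = ord0 by apply/val_inj.
Qed.

Definition off_walls N (f : nat -> R) := forall i j c, (i < N)%N -> (j < N)%N ->
  i != j -> wall_const c -> f i - f j != c.
Definition same_sides N (f g : nat -> R) := forall i j c, (i < N)%N -> (j < N)%N ->
  wall_const c -> (c < f i - f j <-> c < g i - g j).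
Definition decr_on N (f : nat -> R) := forall i j, (i < j)%N -> (j < N)%N -> f j < f i.

Lemma arr_complE n (x : 'rV[R]_n) : arr_compl a x <-> off_walls n (xat x).
Proof.
split=> [[H0 Ha] i j c hi hj ij [->|[k ->]]|H].
- rewrite (xatE x hi) (xatE x hj); case: (ltngtP i j) => h; first exact: H0.
  + by rewrite -oppr_eq0 opprB; apply: H0.
  + by rewrite h eqxx in ij.
- by rewrite (xatE x hi) (xatE x hj); apply: Ha.
- split=> [i j ij|i j k ij]; rewrite -!xat_ord.
  + by apply: H => //; [rewrite neq_ltn ij | exact: wall_const0].
  + by apply: H => //; right; exists k.
Qed.

Lemma dom_chamberE n (x : 'rV[R]_n) : dom_chamber x <-> decr_on n (xat x).
Proof.
split=> H => [i j ij jn|i j ij]; last by rewrite -!xat_ord; apply: H.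
by rewrite (xatE x (ltn_trans ij jn)) (xatE x jn); apply: H.
Qed.

Lemma decr_on_le N f : decr_on N f -> forall i j, (i <= j)%N -> (j < N)%N -> f j <= f i.
Proof. by move=> H i j; rewrite leq_eqVlt => /orP[/eqP->//|ij] jN; exact/ltW/H. Qed.

Lemma off_walls_of_decr N f : decr_on N f ->
  (forall i j c, (i < j)%N -> (j < N)%N -> wall_const c -> f i - f j != c) -> off_walls N f.
Proof.
move=> hc H i j c hi hj ij hcc; case: (ltngtP i j) => h; first exact: H.
- have := hc _ _ h hi; have := wall_const_ge0 hcc.
  by move=> h1 h2; apply/negP => /eqP e; lra.
- by rewrite h eqxx in ij.
Qed.

Lemma preserve_sides N f g : off_walls N f ->
  (forall i j c, (i < N)%N -> (j < N)%N -> i != j -> wall_const c ->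
     (c < f i - f j -> c < g i - g j) /\ (f i - f j < c -> g i - g j < c)) ->
  off_walls N g /\ same_sides N f g.
Proof.
move=> hf H; split.
  move=> i j c hi hj ij hc; have [h1 h2] := H i j c hi hj ij hc.
  by move: (hf i j c hi hj ij hc); rewrite neq_lt => /orP[/h2/lt_eqF|/h1/gt_eqF] ->.
move=> i j c hi hj hc; case: (eqVneq i j) => [->|ij]; first by rewrite !subrr.
have [h1 h2] := H i j c hi hj ij hc; split => // hg.
move: (hf i j c hi hj ij hc); rewrite neq_lt => /orP[/h2|//].
by rewrite ltNge (ltW hg).
Qed.

Lemma region_of_sides n (x y : 'rV[R]_n) : region_of a x y ->
  off_walls n (xat y) /\ same_sides n (xat x) (xat y).
Proof.
move=> hy; split=> [|i j c hi hj hc].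
  by apply/arr_complE; exact: connected_component_sub hy.
case: (eqVneq i j) => [->|ij]; first by rewrite !subrr.
pose f (p : 'rV[R]_n) := xat p i - xat p j.
apply: (@is_interval_side _ (f @` region_of a x)).
- apply/connected_intervalP/connected_continuous_connected.
    exact: component_connected.
  apply: continuous_subspaceT => p.
  have cont k : (k < n)%N -> {for p, continuous (fun q : 'rV[R]_n => xat q k)}.
    by move=> hk; exact: xat_continuous.
  by have := continuousB (cont i hi) (cont j hj).
- exists x => //; apply: connected_component_refl.
  by case: hy => C [Cx CA _] _; exact: CA.
- by exists y.
- move=> [z /connected_component_sub /arr_complE hz fz].
  by have := hz i j c hi hj ij hc; rewrite -/(f z) fz eqxx.
Qed.

(* The set of off-wall points on the same sides as [x] is star-shaped around
   [x], hence connected. *)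
Lemma sides_region_of n (x y : 'rV[R]_n) : arr_compl a x ->
  off_walls n (xat y) -> same_sides n (xat x) (xat y) -> region_of a x y.
Proof.
move=> hx hy hxy.
pose S := [set z : 'rV[R]_n | off_walls n (xat z) /\ same_sides n (xat x) (xat z)].
have Sx : S x by split; [exact/arr_complE | by move=> *; split].
have segS z t : S z -> 0 <= t <= 1 -> S (x + t *: (z - x)).
  move=> [hz hxz] ht; apply: preserve_sides; first exact/arr_complE.
  move=> i j c hi hj ij hc; rewrite !xat_lerp //.
  have -> : (1 - t) * xat x i + t * xat z i - ((1 - t) * xat x j + t * xat z j) =
      (1 - t) * (xat x i - xat x j) + t * (xat z i - xat z j) by ring.
  split=> h; first by apply: convex_gt => //; apply/(hxz i j c hi hj hc).
  apply: convex_lt => //; move: (hz i j c hi hj ij hc); rewrite neq_lt => /orP[//|h'].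
  by have := (hxz i j c hi hj hc).2 h'; rewrite ltNge (ltW h).
suff : S `<=` region_of a x by apply; split.
apply: connected_component_max => //; first by move=> z [/arr_complE].
have -> : S = \bigcup_(z in S) ((fun t : R => x + t *: (z - x)) @` `[0, 1]).
  apply/seteqP; split => [z Sz|w [z Sz [t ht <-]]].
    exists z => //; exists 1; first by rewrite /= in_itv /= ler01 lexx.
    by rewrite scale1r addrC subrK.
  by apply: segS => //; move: ht; rewrite /= in_itv.
apply: bigcup_connected.
  exists x => z _; exists 0; first by rewrite /= in_itv /= ler01 lexx.
  by rewrite scale0r addr0.
move=> z _; apply: connected_continuous_connected; first exact: segment_connected.
apply: continuous_subspaceT; exact: segment_continuous.
Qed.

Lemma region_ofP n (x y : 'rV[R]_n) : arr_compl a x ->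
  region_of a x y <-> off_walls n (xat y) /\ same_sides n (xat x) (xat y).
Proof.
move=> hx; split; first exact: region_of_sides.
by move=> [hy hxy]; apply: sides_region_of.
Qed.

Lemma region_of_refl n (x : 'rV[R]_n) : arr_compl a x -> region_of a x x.
Proof. exact: connected_component_refl. Qed.

Lemma region_of_eq n (x y : 'rV[R]_n) : arr_compl a x -> off_walls n (xat y) ->
  same_sides n (xat x) (xat y) -> region_of a x = region_of a y.
Proof. by move=> hx hy hxy; apply: same_connected_component; apply: sides_region_of. Qed.

Definition big_gap n (x : 'rV[R]_n) k := a ord0 < xat x k.-1 - xat x k.
(* [nbig x i] is the (0-based) index of the block containing coordinate [i]. *)
Definition nbig n (x : 'rV[R]_n) i := count (big_gap x) (iota 1 i).

Lemma size_Kset n (x : 'rV[R]_n) : size (Kset a x) = nbig x n.-1.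
Proof. exact: size_filter. Qed.

Lemma mem_Kset n (x : 'rV[R]_n) k :
  (k \in Kset a x) = [&& (0 < k)%N, (k < n)%N & big_gap x k].
Proof.
rewrite mem_filter mem_iota; apply/andP/and3P.
  by move=> [h /andP[h1 h2]]; split => //; lia.
by move=> [h1 h2 h]; split => //; apply/andP; split => //; lia.
Qed.

Lemma big_gap_eq n (x y : 'rV[R]_n) k : same_sides n (xat x) (xat y) ->
  (0 < k)%N -> (k < n)%N -> big_gap x k = big_gap y k.
Proof.
move=> hs k0 kn; apply/idP/idP => h; apply/(hs k.-1 k _ _ _ wall_const_a0) => //; lia.
Qed.

Lemma nbig0 n (x : 'rV[R]_n) : nbig x 0 = 0%N. Proof. by []. Qed.

Lemma nbigS n (x : 'rV[R]_n) i : nbig x i.+1 = (nbig x i + big_gap x i.+1)%N.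
Proof. by rewrite /nbig -(addn1 i) iotaD count_cat /= add1n addn0 addn1. Qed.

Lemma nbig_mono n (x : 'rV[R]_n) : {homo nbig x : i j / (i <= j)%N}.
Proof.
by apply: homo_leq => [//|y z w|i]; [exact: leq_trans | rewrite nbigS leq_addr].
Qed.

Lemma nbig_lt_big_gap n (x : 'rV[R]_n) i j : (nbig x i < nbig x j)%N ->
  exists k, [/\ (i < k)%N, (k <= j)%N & big_gap x k].
Proof.
elim: j => [|j IH]; first by rewrite nbig0.
rewrite nbigS; case hb: (big_gap x j.+1); rewrite ?addn0 ?addn1 => h.
- exists j.+1; split => //; rewrite ltnNge; apply/negP => /(nbig_mono x).
  by rewrite nbigS hb; lia.
- by have [k [h1 h2 h3]] := IH h; exists k; split => //; apply: leqW.
Qed.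

Lemma nbig_ivt n (x : 'rV[R]_n) N j : (j <= nbig x N)%N ->
  exists i, (i <= N)%N /\ nbig x i = j.
Proof.
elim: N j => [|N IH] j; first by rewrite nbig0 leqn0 => /eqP ->; exists 0%N.
case: (leqP j (nbig x N)) => h1 h2.
  by have [i [h3 h4]] := IH j h1; exists i; split => //; apply: leqW.
exists N.+1; split => //; move: h1 h2; rewrite nbigS.
by case: (big_gap x N.+1); rewrite ?addn1 ?addn0 => h1 h2; lia.
Qed.

Lemma gap_gt_of_nbig n (x : 'rV[R]_n) i j : dom_chamber x -> (i < j)%N -> (j < n)%N ->
  (nbig x i < nbig x j)%N -> a ord0 < xat x i - xat x j.
Proof.
move=> /dom_chamberE hc ij jn /nbig_lt_big_gap [k [ik kj]]; rewrite /big_gap => hk.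
have h1 : xat x k.-1 <= xat x i by apply: (decr_on_le hc); lia.
have h2 : xat x j <= xat x k by apply: (decr_on_le hc); lia.
lra.
Qed.

Lemma gap_le_of_nbig n (x : 'rV[R]_n) p d : dom_chamber x -> (p + d < n)%N ->
  nbig x p = nbig x (p + d) -> xat x p - xat x (p + d) <= d%:R * a ord0.
Proof.
move=> hc; elim: d => [|d IH] hn hb; first by rewrite addn0 subrr mul0r.
have h1 := nbig_mono x (leq_addr d p).
have h2 : (nbig x (p + d) <= nbig x (p + d.+1))%N by apply: nbig_mono; lia.
move: hb; rewrite addnS nbigS => hb.
have hb1 : nbig x p = nbig x (p + d) by lia.
have hb2 : big_gap x (p + d).+1 = false.
  by apply/negbTE/negP => hh; move: hb; rewrite hh; lia.
have := IH (ltac:(lia)) hb1; move: hb2; rewrite /big_gap /= => /negbT; rewrite -leNgt.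
rewrite -natr1 mulrDl mul1r; lra.
Qed.

Lemma region_of_nbig n (x y : 'rV[R]_n) : dom_chamber x -> region_of a x y ->
  [/\ arr_compl a y, dom_chamber y & forall i, (i < n)%N -> nbig y i = nbig x i].
Proof.
move=> hc /region_of_sides [hy hs]; split; first exact/arr_complE.
  apply/dom_chamberE => i j ij jn.
  move/dom_chamberE: hc => /(_ i j ij jn) hxij.
  by have := (hs i j 0 (ltn_trans ij jn) jn wall_const0).1; rewrite !subr_gt0; apply.
move=> i hi; apply/eq_in_count => k; rewrite mem_iota => /andP[k1 k2].
by apply/esym/big_gap_eq => //; lia.
Qed.

Section Level.
Variables (n : nat) (x : 'rV[R]_n).
Hypotheses (hn : (0 < n)%N) (hx : arr_compl a x) (hc : dom_chamber x).
Let L := (nbig x n.-1).+1.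

Lemma nbig_lt i : (i < n)%N -> (nbig x i < L)%N.
Proof. by move=> hi; rewrite ltnS; apply: nbig_mono; lia. Qed.

Definition block_head j := find (fun i => nbig x i == j) (iota 0 n).

Lemma block_headP j : (j < L)%N -> [/\ (block_head j < n)%N, nbig x (block_head j) = j
  & forall i, (i < block_head j)%N -> nbig x i != j].
Proof.
move=> hj; have [i [hi hij]] := @nbig_ivt n x n.-1 j (ltac:(lia)).
have hh : has (fun i => nbig x i == j) (iota 0 n).
  by apply/hasP; exists i; [rewrite mem_iota; lia | apply/eqP].
have h1 : (block_head j < n)%N by rewrite -[X in (_ < X)%N](size_iota 0 n) -has_find.
split => //.
  by have := nth_find 0 hh; rewrite nth_iota // add0n => /eqP.
move=> i' hi'; have := before_find 0 hi'; rewrite nth_iota ?add0n; last lia.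
by move=> ->.
Qed.

Definition block_basis : 'M[R]_(L, n) := \matrix_(j, i) ((nbig x i == j)%:R).

Lemma rank_block_basis : \rank block_basis = L.
Proof.
pose F : 'M[R]_(n, L) := \matrix_(i, j) (((i : nat) == block_head j)%:R).
have WF : block_basis *m F = 1%:M.
  apply/matrixP => j j'; rewrite !mxE.
  have [h1 h2 _] := block_headP (ltn_ord j').
  rewrite (bigD1 (Ordinal h1)) //= big1 => [|i hi]; last first.
    rewrite !mxE; have -> : ((i : nat) == block_head j') = false.
      by apply/negbTE; apply: contra hi => /eqP h; apply/eqP/val_inj.
    by rewrite mulr0.
  by rewrite !mxE eqxx mulr1 addr0 h2 eq_sym.
apply/eqP; rewrite eqn_leq rank_leq_row /=.
by have := mxrankM_maxl block_basis F; rewrite WF mxrank1.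
Qed.

Lemma block_head_dist y i : region_of a x y -> (i < n)%N ->
  `|xat y i - xat y (block_head (nbig x i))| <= n%:R * a ord0.
Proof.
move=> hy iN; have [_ hyd hyb] := region_of_nbig hc hy.
have [h1 h2 h3] := block_headP (nbig_lt iN).
move: h1 h2 h3; set p := block_head (nbig x i) => h1 h2 h3.
have pi : (p <= i)%N by rewrite leqNgt; apply/negP => /h3; rewrite eqxx.
have hb : nbig y p = nbig y (p + (i - p)) by rewrite subnKC // !hyb // h2.
have := @gap_le_of_nbig n y p (i - p) hyd (ltac:(lia)) hb; rewrite subnKC //.
have := decr_on_le (proj1 (dom_chamberE y) hyd) pi iN.
have : (i - p)%:R * a ord0 <= n%:R * a ord0.
  by apply: ler_wpM2r; [apply/ltW | rewrite ler_nat; lia].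
rewrite ler_norml; lra.
Qed.

(* Projecting each coordinate onto the head of its block lands in the row
   space of [block_basis] at bounded distance. *)
Lemma region_tube_upper : tube_dim (region_of a x) L.
Proof.
exists block_basis; split; first exact: rank_block_basis.
pose C := n%:R * a ord0.
have C0 : 0 <= C by apply: mulr_ge0 => //; apply/ltW.
exists (n%:R * C + 1); first by have := mulr_ge0 (ler0n R n) C0; lra.
move=> y hy; pose cv := \row_(j < L) xat y (block_head j).
exists (cv *m block_basis); first exact: submxMl.
apply: le_trans (_ : n%:R * C <= _); last lra.
apply: enorm_le => // i; rewrite (_ : _ 0 i = xat y i - xat y (block_head (nbig x i))).
  exact: block_head_dist.
rewrite !mxE (bigD1 (Ordinal (nbig_lt (ltn_ord i)))) //= big1 => [|j hj].
  by rewrite !mxE eqxx mulr1 addr0 xat_ord.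
rewrite !mxE; have -> : (nbig x i == j) = false.
  by apply/negbTE; apply: contra hj => /eqP h; apply/eqP/val_inj.
by rewrite mulr0.
Qed.

Definition lead_indicator j : 'rV[R]_n :=
  \row_(i < n) (if (nbig x i < j)%N then 1 else 0).

Lemma region_of_shift (s : R) j : 0 <= s -> region_of a x (x + s *: lead_indicator j).
Proof.
move=> s0; have hxN := proj1 (arr_complE x) hx; have hcN := proj1 (dom_chamberE x) hc.
apply/(region_ofP _ hx); apply: preserve_sides => // i i' c hi hi' ii' hcc.
rewrite !(xatE _ hi) !(xatE _ hi') !mxE -!(xatE _ hi) -!(xatE _ hi').
have hc0 := wall_const_ge0 hcc; have hca := wall_const_le hcc.
case: (ltngtP i i') => hlt; last by rewrite hlt eqxx in ii'.
- have hm := nbig_mono x (ltnW hlt).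
  case h1: (nbig x i < j)%N; case h2: (nbig x i' < j)%N; rewrite ?mulr1 ?mulr0.
  + split; lra.
  + have := gap_gt_of_nbig hc hlt hi' (ltac:(lia)); split; lra.
  + lia.
  + split; lra.
- have hm := nbig_mono x (ltnW hlt); have hlt' := hcN _ _ hlt hi.
  case h1: (nbig x i < j)%N; case h2: (nbig x i' < j)%N; rewrite ?mulr1 ?mulr0.
  + split; lra.
  + lia.
  + split; lra.
  + split; lra.
Qed.

(* Every difference of consecutive [lead_indicator]s is a row of
   [block_basis], and each [lead_indicator] is a recession direction. *)
Lemma region_tube_lower l : (l < L)%N -> ~ tube_dim (region_of a x) l.
Proof.
move=> hl [W [rW [r r0 H]]].
have vsub j : (lead_indicator j <= W)%MS.
  apply: (@tube_recession _ _ _ W x (lead_indicator j) r) => s s0; apply: H.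
  exact: region_of_shift.
have rows (j : 'I_L) : (row j block_basis <= W)%MS.
  have -> : row j block_basis = lead_indicator j.+1 - lead_indicator j.
    apply/rowP => i; rewrite !mxE ltnS.
    by case: (ltngtP (nbig x i) j) => h;
      rewrite ?h ?eqxx ?subrr ?subr0 // ?ltn_eqF // ?gtn_eqF.
  by apply: addmx_sub; [exact: vsub | rewrite eqmx_opp; exact: vsub].
have := mxrankS (introT row_subP rows); rewrite rank_block_basis rW; lia.
Qed.

End Level.

Lemma Rle_region_of n (x : 'rV[R]_n) : (0 < n)%N -> arr_compl a x -> dom_chamber x ->
  Rle a (size (Kset a x)).+1 (region_of a x).
Proof.
move=> hn hx hc; split; first by exists x.
split; first by rewrite size_Kset; split; [exact: region_tube_upper | exact: region_tube_lower].
by move=> y /(region_of_nbig hc) [].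
Qed.

Lemma off_walls_window N f p M g : (p + M <= N)%N ->
  (forall t, (t < M)%N -> g t = f (p + t)) -> off_walls N f -> off_walls M g.
Proof. by move=> hM e H i j c hi hj ij hc; rewrite !e //; apply: H => //; lia. Qed.

Lemma decr_on_window N f p M g : (p + M <= N)%N ->
  (forall t, (t < M)%N -> g t = f (p + t)) -> decr_on N f -> decr_on M g.
Proof. by move=> hM e H i j ij hj; rewrite !e //; [apply: H | ]; lia. Qed.

Lemma same_sides_window N f g p M f' g' : (p + M <= N)%N ->
  (forall t, (t < M)%N -> f' t = f (p + t)) -> (forall t, (t < M)%N -> g' t = g (p + t)) ->
  same_sides N f g -> same_sides M f' g'.
Proof. by move=> hM e e' H i j c hi hj hc; rewrite !e // !e' //; apply: H => //; lia. Qed.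

Lemma arr_compl_block n (x : 'rV[R]_n) p q : (p <= q)%N -> (q <= n)%N ->
  arr_compl a x -> arr_compl a (block x p q).
Proof.
move=> pq qn /arr_complE hx; apply/arr_complE.
by apply: (off_walls_window (p := p)) hx => [|t ht]; [lia | rewrite xat_block].
Qed.

Lemma dom_chamber_block n (x : 'rV[R]_n) p q : (p <= q)%N -> (q <= n)%N ->
  dom_chamber x -> dom_chamber (block x p q).
Proof.
move=> pq qn /dom_chamberE hx; apply/dom_chamberE.
by apply: (decr_on_window (p := p)) hx => [|t ht]; [lia | rewrite xat_block].
Qed.

Lemma same_sides_block n (x y : 'rV[R]_n) p q : (p <= q)%N -> (q <= n)%N ->
  same_sides n (xat x) (xat y) -> same_sides (q - p) (xat (block x p q)) (xat (block y p q)).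
Proof.
move=> pq qn hxy.
by apply: (same_sides_window (p := p)) hxy => [|t ht|t ht]; [lia | rewrite xat_block..].
Qed.

Lemma Kset_eq n (x y : 'rV[R]_n) : same_sides n (xat x) (xat y) -> Kset a x = Kset a y.
Proof.
move=> hs; apply: eq_in_filter => k; rewrite mem_iota => /andP[h1 h2].
by apply: big_gap_eq => //; lia.
Qed.

Definition cuts n (x : 'rV[R]_n) := rcons (Kset a x) n.

Lemma cuts_path n (x : 'rV[R]_n) : (0 < n)%N -> path ltn 0 (cuts x).
Proof.
move=> hn; rewrite rcons_path; apply/andP; split.
  rewrite path_sortedE; last exact: ltn_trans.
  apply/andP; split; first by apply/allP => k; rewrite mem_Kset => /and3P[].
  by apply: sorted_filter; [exact: ltn_trans | exact: iota_ltn_sorted].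
have := mem_last 0 (Kset a x); rewrite inE => /orP[/eqP -> //|].
by rewrite mem_Kset => /and3P[].
Qed.

Lemma cuts_le n (x : 'rV[R]_n) : all (fun q => q <= n)%N (cuts x).
Proof.
apply/allP => z; rewrite mem_rcons inE => /orP[/eqP -> //|].
by rewrite mem_Kset => /and3P[_ /ltnW].
Qed.

Lemma phi_eq_sides n (x y : 'rV[R]_n) : (0 < n)%N -> arr_compl a x -> arr_compl a y ->
  same_sides n (xat x) (xat y) -> phi a x = phi a y.
Proof.
move=> hn hx hy hs; rewrite /phi (Kset_eq hs).
apply: eq_pairmap_path (path_all_and (cuts_path y hn) (cuts_le y)) _ => p q /andP[pq qn].
have pq' := ltnW pq; congr existT; apply: region_of_eq.
- exact: arr_compl_block.
- exact/arr_complE/arr_compl_block.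
- exact: same_sides_block.
Qed.

Definition regT0 : regT R := existT _ 0%N set0.

Lemma all_blocksP (s : seq (regT R)) : all_blocks a s <->
  (forall j, (j < size s)%N ->
     (0 < projT1 (nth regT0 s j))%N /\ Rle a 1 (projT2 (nth regT0 s j))).
Proof.
elim: s => [//|b s IH] /=; split=> [[h1 [h2 /IH h3]] [|j] hj /=|H]; first by [].
  exact: h3.
have [h1 h2] := H 0%N (ltn0Sn _); split => //; split => //.
by apply/IH => j hj; apply: (H j.+1).
Qed.

Lemma Kset_block_nil n (x : 'rV[R]_n) p q : (p <= q)%N -> (q <= n)%N ->
  (forall k, (p < k)%N -> (k < q)%N -> ~~ big_gap x k) -> Kset a (block x p q) = [::].
Proof.
move=> pq qn H; apply/eqP; rewrite -size_eq0 size_filter.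
rewrite (@eq_in_count _ _ pred0) ?count_pred0 // => k; rewrite mem_iota => /andP[k1 k2].
rewrite /= !xat_block; [|lia|lia].
have := H (p + k)%N (ltac:(lia)) (ltac:(lia)); rewrite /big_gap.
by rewrite (_ : (p + k).-1 = p + k.-1)%N; [move/negbTE | lia].
Qed.

Lemma codom_elt_phi n (x : 'rV[R]_n) : (0 < n)%N -> arr_compl a x -> dom_chamber x ->
  codom_elt a n (size (Kset a x)).+1 (phi a x).
Proof.
move=> hn hx hc; split; first by rewrite size_pairmap size_rcons.
split.
  rewrite /phi (@map_projT1_pairmap (fun k => set 'rV[R]_k) (fun p q => (q - p)%N)
     (fun p q => region_of a (block x p q))).
  have := sumn_pairmap_subn (sub_path ltnW (cuts_path x hn)).
  by rewrite addn0 last_rcons.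
apply/all_blocksP => j; rewrite size_pairmap => hj.
rewrite /phi (nth_pairmap 0%N) //=.
set p := nth 0%N (0%N :: cuts x) j; set q := nth 0%N (cuts x) j.
have pq : (p < q)%N by apply: path_nth_lt => //; exact: cuts_path.
have qn : (q <= n)%N by move/allP: (cuts_le x); apply; apply: mem_nth.
split; first by rewrite subn_gt0.
have noK k : (p < k)%N -> (k < q)%N -> ~~ big_gap x k.
  move=> h1 h2; apply/negP => hb.
  have kK : k \in cuts x.
    by rewrite mem_rcons inE mem_Kset hb andbT; apply/orP; right; apply/andP; split; lia.
  by have := path_nth_between 0%N (cuts_path x hn) hj kK; rewrite h1 h2.
have := Rle_region_of (ltac:(lia) : (0 < q - p)%N)
  (arr_compl_block (ltnW pq) qn hx) (dom_chamber_block (ltnW pq) qn hc).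
by rewrite (Kset_block_nil (ltnW pq) qn noK).
Qed.

Lemma phi_eq_Kset n (x1 x2 : 'rV[R]_n) : (0 < n)%N ->
  phi a x1 = phi a x2 -> Kset a x1 = Kset a x2.
Proof.
move=> hn E; suff : cuts x1 = cuts x2 by move/rcons_inj => [].
have := congr1 (map (fun b : regT R => projT1 b)) E; rewrite /phi.
rewrite !(@map_projT1_pairmap (fun k => set 'rV[R]_k) (fun p q => (q - p)%N)).
by apply: pairmap_subn_inj; apply: (sub_path ltnW); apply: cuts_path.
Qed.

Lemma phi_eq_block_sides n (x1 x2 : 'rV[R]_n) k : (0 < n)%N -> arr_compl a x2 ->
  phi a x1 = phi a x2 -> Kset a x1 = Kset a x2 -> (k < size (cuts x1))%N ->
  same_sides (nth 0 (cuts x1) k - nth 0 (0%N :: cuts x1) k)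
    (xat (block x1 (nth 0 (0%N :: cuts x1) k) (nth 0 (cuts x1) k)))
    (xat (block x2 (nth 0 (0%N :: cuts x1) k) (nth 0 (cuts x1) k))).
Proof.
move=> hn hx2 E EK hk.
set p := nth 0 (0%N :: cuts x1) k; set q := nth 0 (cuts x1) k.
have pq : (p < q)%N by apply: path_nth_lt => //; exact: cuts_path.
have qn : (q <= n)%N by move/allP: (cuts_le x1); apply; apply: mem_nth.
have := congr1 (fun z => nth regT0 z k) E; rewrite /phi -EK -/(cuts x1).
rewrite !(nth_pairmap 0%N) // => /(inj_pair2_eq_dec _ PeanoNat.Nat.eq_dec _ _ _ _) E'.
have : region_of a (block x1 p q) (block x2 p q).
  by rewrite E'; apply: region_of_refl; apply: arr_compl_block => //; exact: ltnW.
by case/region_of_sides.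
Qed.

Lemma block_of_nbig n (x : 'rV[R]_n) i j : (0 < n)%N -> (i <= j)%N -> (j < n)%N ->
  nbig x i = nbig x j -> exists2 k, (k < size (cuts x))%N &
    (nth 0 (0%N :: cuts x) k <= i)%N && (j < nth 0 (cuts x) k)%N.
Proof.
move=> hn ij jn hb.
have [k hk /andP[pk kq]] := @path_locate 0%N (cuts x) i (cuts_path x hn) (leq0n _)
  (ltac:(by rewrite last_rcons; lia)).
exists k; rewrite // pk /=; set q := nth 0 (cuts x) k in kq *.
rewrite ltnNge; apply/negP => qj.
have : q \in Kset a x.
  have : q \in cuts x by apply: mem_nth.
  by rewrite mem_rcons inE => /orP[/eqP qe|//]; lia.
rewrite mem_Kset => /and3P[q0 _ bq].
have : (nbig x i < nbig x q)%N.
  rewrite -(ltn_predK q0) nbigS (ltn_predK q0) bq addn1 ltnS; apply: nbig_mono; lia.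
by have := nbig_mono x qj; lia.
Qed.

(* Across a big gap both differences exceed [a_1]; inside a block the block
   regions agree. *)
Lemma phi_inj n (x1 x2 : 'rV[R]_n) : (0 < n)%N -> arr_compl a x1 -> arr_compl a x2 ->
  dom_chamber x1 -> dom_chamber x2 -> phi a x1 = phi a x2 -> region_of a x1 x2.
Proof.
move=> hn hx1 hx2 hc1 hc2 E.
have EK := phi_eq_Kset hn E.
have ebig k : (0 < k)%N -> (k < n)%N -> big_gap x1 k = big_gap x2 k.
  by move=> h1 h2; have := mem_Kset x1 k; rewrite EK mem_Kset h1 h2.
have enbig i : (i < n)%N -> nbig x1 i = nbig x2 i.
  move=> hi; apply: eq_in_count => k; rewrite mem_iota => /andP[k1 k2].
  by apply: ebig; lia.
apply/(region_ofP _ hx1); split; first exact/arr_complE.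
move=> i j c hi hj hc; have c0 := wall_const_ge0 hc; have ca := wall_const_le hc.
case: (ltngtP i j) => hij; last by rewrite hij !subrr.
- case: (ltnP (nbig x1 i) (nbig x1 j)) => hb.
    have g1 := gap_gt_of_nbig hc1 hij hj hb.
    have g2 := gap_gt_of_nbig hc2 hij hj (ltac:(rewrite -!enbig //)).
    by split => _; lra.
  have hbe : nbig x1 i = nbig x1 j by apply/eqP; rewrite eqn_leq hb nbig_mono // ltnW.
  have [k hk /andP[pk jq]] := block_of_nbig hn (ltnW hij) hj hbe.
  have := phi_eq_block_sides hn hx2 E EK hk.
  set p := nth 0 (0%N :: cuts x1) k in pk *; set q := nth 0 (cuts x1) k in jq *.
  move=> /(_ (i - p)%N (j - p)%N c (ltac:(lia)) (ltac:(lia)) hc).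
  by rewrite !xat_block ?subnKC //; lia.
- have := proj1 (dom_chamberE x1) hc1 _ _ hij hi.
  have := proj1 (dom_chamberE x2) hc2 _ _ hij hi.
  by split => h; lra.
Qed.

Lemma Rle_mem n l (D : set 'rV[R]_n) x : Rle a l D -> D x ->
  [/\ arr_compl a x, dom_chamber x & D = region_of a x].
Proof.
move=> [[x0 hx0 ->] [_ hd]] hx; split.
- exact: connected_component_sub hx.
- by apply: hd; rewrite /region_of.
- exact: same_connected_component.
Qed.

Lemma off_walls_translate N f g c0 : (forall t, (t < N)%N -> g t = f t + c0) ->
  off_walls N f -> off_walls N g.
Proof.
move=> e H i j c hi hj ij hc; rewrite !e //.
by rewrite (_ : f i + c0 - (f j + c0) = f i - f j); [exact: H | ring].
Qed.

Lemma same_sides_translate N f g c0 : (forall t, (t < N)%N -> g t = f t + c0) ->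
  same_sides N g f.
Proof. by move=> e i j c hi hj hc; rewrite !e // (_ : f i + c0 - (f j + c0) = f i - f j) //; ring. Qed.

Lemma existT_region_of k1 k2 (u : 'rV[R]_k1) (D : set 'rV[R]_k2) (z : 'rV[R]_k2) :
  k1 = k2 -> D = region_of a z -> arr_compl a z -> off_walls k1 (xat u) ->
  same_sides k1 (xat u) (xat z) ->
  existT (fun k => set 'rV[R]_k) k1 (region_of a u) = existT _ k2 D.
Proof.
move=> e; subst k2 => -> hz hu hs; congr existT.
by apply: region_of_eq => //; exact/arr_complE.
Qed.

Definition rep (b : regT R) : 'rV[R]_(projT1 b) := xget 0 (projT2 b).
Definition repf (b : regT R) : nat -> R := xat (rep b).

Lemma rep_props b : (0 < projT1 b)%N -> Rle a 1 (projT2 b) ->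
  [/\ off_walls (projT1 b) (repf b), decr_on (projT1 b) (repf b),
   (forall k, (0 < k)%N -> (k < projT1 b)%N -> ~~ big_gap (rep b) k) &
   projT2 b = region_of a (rep b)].
Proof.
move=> hk hR.
have hin : projT2 b (rep b).
  apply: xgetPex; case: hR => [[x0 hx0 ->] _]; exists x0; exact: region_of_refl.
have [hc hd hD] := Rle_mem hR hin.
have K0 : Kset a (rep b) = [::].
  have := Rle_region_of hk hc hd; rewrite -hD => hR2.
  by apply/eqP; rewrite -size_eq0 -eqSS -(has_level_uniq hR.2.1 hR2.2.1).
split => //; [exact/arr_complE | exact/dom_chamberE |].
by move=> k k0 kb; apply/negP => hb; have := mem_Kset (rep b) k; rewrite K0 k0 kb hb.
Qed.

Fixpoint stack (M : R) (s : seq (regT R)) (i : nat) : R :=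
  if s is b :: s' then (if (i < projT1 b)%N then repf b i else stack M s' (i - projT1 b) - M)
  else 0.

Definition offset (s : seq (regT R)) j := sumn (take j (map (fun b : regT R => projT1 b) s)).

Lemma offset0 s : offset s 0 = 0%N. Proof. by case: s. Qed.

Lemma offset_cons b s j : offset (b :: s) j.+1 = (projT1 b + offset s j)%N.
Proof. by []. Qed.

Lemma offsetS s j : (j < size s)%N -> offset s j.+1 = (offset s j + projT1 (nth regT0 s j))%N.
Proof.
elim: s j => [//|b s IH] [|j] hj; first by rewrite offset_cons !offset0 addn0.
by rewrite offset_cons (IH j hj) offset_cons addnA.
Qed.

Lemma offset_size s : offset s (size s) = sumn (map (fun b : regT R => projT1 b) s).
Proof. by rewrite /offset take_oversize // size_map. Qed.

Lemma offset_mono s : {homo offset s : j1 j2 / (j1 <= j2)%N}.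
Proof.
elim: s => [|b s IH] [|j1] [|j2] //= h; rewrite ?offset0 //.
by rewrite !offset_cons leq_add2l; apply: IH.
Qed.

Lemma stackE M s j t : (j < size s)%N -> (t < projT1 (nth regT0 s j))%N ->
  stack M s (offset s j + t) = repf (nth regT0 s j) t - j%:R * M.
Proof.
elim: s j => [//|b s IH] [|j] /= hj ht; first by rewrite offset0 add0n ht mul0r subr0.
rewrite offset_cons -addnA ltnNge leq_addr /= addKn IH //.
by rewrite -natr1 mulrDl mul1r; lra.
Qed.

Lemma offset_decomp s i : (i < sumn (map (fun b : regT R => projT1 b) s))%N ->
  exists j t, [/\ (j < size s)%N, (t < projT1 (nth regT0 s j))%N & i = (offset s j + t)%N].
Proof.
elim: s i => [//|b s IH] i /= hi.
case: (ltnP i (projT1 b)) => h; first by exists 0%N, i; rewrite offset0.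
have [j [t [h1 h2 h3]]] := IH (i - projT1 b)%N (ltac:(lia)).
by exists j.+1, t; split => //; rewrite offset_cons; lia.
Qed.

Lemma offset_le_index s j j' t t' : (j' < size s)%N -> (t' < projT1 (nth regT0 s j'))%N ->
  (offset s j + t <= offset s j' + t')%N -> (j <= j')%N.
Proof.
move=> hj' ht' hle; rewrite leqNgt; apply/negP => jj.
by have := offsetS hj'; have := @offset_mono s j'.+1 j jj; lia.
Qed.

Definition rep_bound (s : seq (regT R)) := \sum_(b <- s) \sum_(t < projT1 b) `|repf b t|.

Lemma rep_bound_ge0 s : 0 <= rep_bound s.
Proof. by apply: sumr_ge0 => b _; apply: sumr_ge0. Qed.

Lemma rep_le_bound s j t : (j < size s)%N -> (t < projT1 (nth regT0 s j))%N ->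
  `|repf (nth regT0 s j) t| <= rep_bound s.
Proof.
elim: s j => [//|b s IH] [|j] hj ht; rewrite /rep_bound big_cons -/(rep_bound s).
  have := rep_bound_ge0 s; rewrite (bigD1 (Ordinal ht)) //=.
  have : 0 <= \sum_(i < projT1 b | i != Ordinal ht) `|repf b i| by apply: sumr_ge0.
  lra.
have := IH j hj ht.
have : 0 <= \sum_(t < projT1 b) `|repf b t| by apply: sumr_ge0.
lra.
Qed.

Section Surjectivity.
Variables (n l : nat) (s : seq (regT R)).
Hypotheses (hn : (0 < n)%N) (hl : (0 < l)%N) (hsz : size s = l)
  (hsum : sumn (map (fun b : regT R => projT1 b) s) = n) (hbl : all_blocks a s).

(* Consecutive representatives are separated by more than [a_1], since
   every coordinate of a representative is bounded by [rep_bound s]. *)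
Let M := 2 * rep_bound s + a ord0 + 1.
Definition stacked : 'rV[R]_n := \row_(i < n) stack M s i.

Lemma xat_stacked i : (i < n)%N -> xat stacked i = stack M s i.
Proof. by move=> hi; rewrite (xatE _ hi) mxE. Qed.

Lemma stack_cross_gap j j' t t' : (j < j')%N -> (j' < size s)%N ->
  (t < projT1 (nth regT0 s j))%N -> (t' < projT1 (nth regT0 s j'))%N ->
  a ord0 < stack M s (offset s j + t) - stack M s (offset s j' + t').
Proof.
move=> jj hj' ht ht'; have hj : (j < size s)%N by lia.
rewrite !stackE //.
have := rep_le_bound hj ht; have := rep_le_bound hj' ht'; rewrite !ler_norml.
move=> /andP[h1 h2] /andP[h3 h4].
have hM : 0 < M by rewrite /M; have := ha_pos ord0; have := rep_bound_ge0 s; lra.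
have hMM : M <= (j'%:R - j%:R) * M.
  have hjj : j%:R + 1 <= j'%:R :> R by rewrite natr1 ler_nat.
  by rewrite -[X in X <= _]mul1r; apply: ler_wpM2r; [exact: ltW | lra].
move: hMM; rewrite /M mulrBl; lra.
Qed.

Lemma stacked_block i : (i < n)%N -> exists j t,
  [/\ (j < size s)%N, (t < projT1 (nth regT0 s j))%N & i = (offset s j + t)%N].
Proof. by move=> hi; apply: offset_decomp; rewrite hsum. Qed.

Lemma stacked_pair_cases i i' : (i < i')%N -> (i' < n)%N ->
  (exists j t t', [/\ (j < size s)%N, (t < t')%N, (t' < projT1 (nth regT0 s j))%N,
     i = (offset s j + t)%N & i' = (offset s j + t')%N]) \/
  a ord0 < stack M s i - stack M s i'.
Proof.
move=> ii hi'; have hi : (i < n)%N by lia.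
have [j [t [h1 h2 ei]]] := stacked_block hi; have [j' [t' [h1' h2' ei']]] := stacked_block hi'.
have jj : (j <= j')%N by apply: (offset_le_index (t := t) h1' h2'); lia.
rewrite ei ei'; case: (ltngtP j j') => e; last first.
- by subst j'; left; exists j, t, t'; split => //; lia.
- lia.
- by right; apply: stack_cross_gap.
Qed.

Lemma stacked_chamber : dom_chamber stacked.
Proof.
apply/dom_chamberE => i i' ii hi'; have hi : (i < n)%N by lia.
rewrite !xat_stacked //; case: (stacked_pair_cases ii hi') => [[j [t [t' [h1 h2 h3 -> ->]]]]|h].
  have [hp hR] := proj1 (all_blocksP s) hbl j h1; have [_ hc _ _] := rep_props hp hR.
  by rewrite !stackE //; [have := hc _ _ h2 h3; lra | lia].
by have := ha_pos ord0; lra.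
Qed.

Lemma stacked_compl : arr_compl a stacked.
Proof.
apply/arr_complE; apply: off_walls_of_decr; first exact/dom_chamberE/stacked_chamber.
move=> i i' c ii hi' hc; have hi : (i < n)%N by lia.
rewrite !xat_stacked //; case: (stacked_pair_cases ii hi') => [[j [t [t' [h1 h2 h3 -> ->]]]]|h].
  have [hp hR] := proj1 (all_blocksP s) hbl j h1; have [hcp _ _ _] := rep_props hp hR.
  rewrite !stackE //; last lia.
  rewrite (_ : _ - _ = repf (nth regT0 s j) t - repf (nth regT0 s j) t'); last by ring.
  by apply: hcp => //; lia.
by have := wall_const_le hc; move=> hh; apply/negP => /eqP e; lra.
Qed.

Lemma offset_lt j j' : (j < j')%N -> (j' <= size s)%N -> (offset s j < offset s j')%N.
Proof.
move=> jj hj'; have := @offsetS s j (ltac:(lia)); have := @offset_mono s j.+1 j' jj.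
by have [hp _] := proj1 (all_blocksP s) hbl j (ltac:(lia)); lia.
Qed.

Lemma offset_l : offset s l = n.
Proof. by rewrite -hsz offset_size. Qed.

Lemma Kset_stacked : Kset a stacked = map (offset s) (iota 1 l.-1).
Proof.
apply: (irr_sorted_eq ltn_trans ltnn).
- by apply: sorted_filter; [exact: ltn_trans | exact: iota_ltn_sorted].
- rewrite sorted_map; apply: (@sub_in_sorted _ (fun j => (j < l)%N) ltn); last first.
    exact: iota_ltn_sorted.
  + by apply/allP => j; rewrite mem_iota; lia.
  + by move=> j j' hj hj' /= jj; apply: offset_lt; rewrite ?hsz //; apply: ltnW.
move=> k; rewrite mem_Kset; apply/and3P/mapP.
- move=> [k0 kn hb]; have [j [t [h1 h2 e]]] := stacked_block kn.
  have [hp hR] := proj1 (all_blocksP s) hbl j h1; have [_ _ hnb _] := rep_props hp hR.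
  case: (posnP t) => t0.
    subst t; exists j; last by rewrite e addn0.
    rewrite mem_iota; case: (posnP j) => j0; last by lia.
    by move: k0; rewrite e j0 offset0.
  move: hb; rewrite /big_gap !xat_stacked //; last lia.
  rewrite (_ : k.-1 = offset s j + t.-1)%N; last by lia.
  rewrite e !stackE //; last lia.
  rewrite (_ : _ - _ = repf (nth regT0 s j) t.-1 - repf (nth regT0 s j) t); last by ring.
  by rewrite /repf => hb; move: (hnb t t0 h2); rewrite /big_gap hb.
- move=> [j]; rewrite mem_iota => /andP[j1 j2] ->.
  have hj : (j < size s)%N by lia.
  have k0 : (0 < offset s j)%N by rewrite -(offset0 s); apply: offset_lt; lia.
  have kn : (offset s j < n)%N by rewrite -offset_l; apply: offset_lt; lia.
  split => //; rewrite /big_gap !xat_stacked //; last lia.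
  have [hp _] := proj1 (all_blocksP s) hbl j hj.
  have [hp' _] := proj1 (all_blocksP s) hbl j.-1 (ltac:(lia)).
  have e1 := @offsetS s j.-1 (ltac:(lia)); rewrite (ltn_predK j1) in e1.
  rewrite (_ : (offset s j).-1 = offset s j.-1 + (projT1 (nth regT0 s j.-1)).-1)%N; last by lia.
  by rewrite -[offset s j]addn0; apply: stack_cross_gap => //; lia.
Qed.

Lemma Rle_stacked : Rle a l (region_of a stacked).
Proof.
have := Rle_region_of hn stacked_compl stacked_chamber.
by rewrite Kset_stacked size_map size_iota (ltn_predK hl).
Qed.

Lemma phi_stacked : phi a stacked = s.
Proof.
have E : rcons (Kset a stacked) n = map (offset s) (iota 1 l).
  rewrite Kset_stacked -offset_l -map_rcons; congr map.
  have e : l = (l.-1 + 1)%N by lia.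
  by rewrite -cats1 [in RHS]e iotaD add1n (ltn_predK hl).
rewrite /phi E.
have := pairmap_map_iota (fun p q : nat =>
   existT (fun k => set 'rV[R]_k) (q - p)%N (region_of a (block stacked p q))) (offset s) 0 l.
rewrite offset0 => ->.
rewrite -[RHS](mkseq_nth regT0 s) hsz /mkseq; apply/eq_in_map => j.
rewrite mem_iota add0n => /andP[_ hj].
have hjs : (j < size s)%N by rewrite hsz.
have [hp hR] := proj1 (all_blocksP s) hbl j hjs; have [hcp _ _ hD] := rep_props hp hR.
have ek : (offset s j.+1 - offset s j)%N = projT1 (nth regT0 s j) by rewrite offsetS // addKn.
have hjn : (offset s j.+1 <= n)%N by rewrite -offset_l; apply: offset_mono.
have ext t : (t < offset s j.+1 - offset s j)%N ->
    xat (block stacked (offset s j) (offset s j.+1)) t = repf (nth regT0 s j) t + - (j%:R * M).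
  move=> ht; rewrite xat_block // xat_stacked; last by move: ht; rewrite ek => ht; lia.
  by rewrite stackE //; rewrite -ek.
rewrite [RHS]sigT_eta.
apply: (existT_region_of (z := rep (nth regT0 s j))) => //.
- exact/arr_complE.
- by apply: off_walls_translate ext _; rewrite ek.
- exact: same_sides_translate ext.
Qed.

End Surjectivity.

End Arrangement.

Theorem lemma3p3 (R : realType) (m : nat) (a : 'I_m.+1 -> R)
    (ha_pos : forall k, 0 < a k)
    (ha_dec : forall k k' : 'I_m.+1, (k < k')%N -> a k' < a k)
    (n l : nat) (hn : (0 < n)%N) (hl : (0 < l)%N) :
  (forall D : set 'rV[R]_n, Rle a l D -> forall x, D x -> size (Kset a x) = l.-1) /\
  (forall D : set 'rV[R]_n, Rle a l D -> forall x y, D x -> D y -> phi a x = phi a y) /\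
  (forall D : set 'rV[R]_n, Rle a l D -> forall x, D x -> codom_elt a n l (phi a x)) /\
  (forall D1 D2 : set 'rV[R]_n, Rle a l D1 -> Rle a l D2 ->
     forall x1 x2, D1 x1 -> D2 x2 -> phi a x1 = phi a x2 -> D1 = D2) /\
  (forall s, codom_elt a n l s ->
     exists D : set 'rV[R]_n, Rle a l D /\ exists2 x, D x & phi a x = s).
Proof.
have level (D : set 'rV[R]_n) : Rle a l D -> forall x, D x -> size (Kset a x) = l.-1.
  move=> hD x /(Rle_mem hD) [hx hc hE].
  have := Rle_region_of ha_pos ha_dec hn hx hc; rewrite -hE => hD'.
  by rewrite (has_level_uniq hD.2.1 hD'.2.1).
split => //; split.
  move=> D hD x y /(Rle_mem hD) [hx _ ->] /region_of_sides [hy hs].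
  by apply: phi_eq_sides hs => //; exact/arr_complE.
split.
  move=> D hD x hx; have [hcx hdx _] := Rle_mem hD hx.
  have := codom_elt_phi ha_pos ha_dec hn hcx hdx.
  by rewrite (level D hD x hx) (ltn_predK hl).
split.
  move=> D1 D2 h1 h2 x1 x2 /(Rle_mem h1) [hx1 hc1 ->] /(Rle_mem h2) [hx2 hc2 ->] E.
  exact/same_connected_component/(phi_inj ha_pos ha_dec hn hx1 hx2 hc1 hc2 E).
move=> s [hsz [hsum hbl]].
exists (region_of a (stacked a n s)).
split; first exact: (Rle_stacked ha_pos ha_dec hn hl hsz hsum hbl).
exists (stacked a n s); last exact: (phi_stacked ha_pos ha_dec hn hl hsz hsum hbl).
exact/region_of_refl/(stacked_compl ha_pos ha_dec hn hl hsz hsum hbl).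
Qed.
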